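(* Let $g\ge1$ and $n\ge1$. For any $T\in\mathcal T_n$ there exists $\widehat T\in\mathcal T_n$ such that for every segment $[t,t')$ of $T$ (with $1\le t<t'\le n+1$): (i) $\hat w_n(\widehat T)>0$, $t$ and $t'$ are switch points of $\widehat T$ (where $t'=n+1$ is considered a switch point), and $\widehat T$ contains at most $l=\left\lceil\frac{\log(t'-t)}{\lfloor\log(g+1)\rfloor}\right\rceil+1$ segments in $[t,t')$; (ii) if the switch points of $\widehat T$ in $[t,t')$ are $t_1:=t<t_2<\cdots<t_{l'}$ and $t_{l'+1}:=t'$, then $l'\le l$, and for every nondecreasing function $f:[0,\infty)\to[0,\infty)$, \[ \sum_{i=1}^{l'}f(t_{i+1}-t_i)\le\sum_{i=0}^{l'-2}f\!\left(\frac{t'-t}{2^{i\lfloor\log(g+1)\rfloor}}\right)+f(t'-t) \le\int_0^{\frac{\log(t'-t)}{\lfloor\log(g+1)\rfloor}}f\!\left(\frac{t'-t}{2^{x\lfloor\log(g+1)\rfloor}}\right)dx+2f(t'-t), \] where the first sum on the right is empty if $l'=1$.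
   Context: $\log$ is base 2. $\mathcal T_n$ is the set of transition paths $T=(t_1,\ldots,t_C;n)$ with $C\ge0$ and $1<t_1<\cdots<t_C\le n$; with $t_0=1$, $t_{C+1}=n+1$, the segments of $T$ are $[t_c,t_{c+1})$, $c=0,\ldots,C$, and its switch points are $t_1,\ldots,t_C$. Weights: given switch probabilities $p(t|t')\in(0,1)$ for all $1\le t'<t$, let $U_1=1$ and $\Pr(U_t=t\mid U_{t-1}=t')=p(t|t')=1-\Pr(U_t=t'\mid U_{t-1}=t')$ define a Markov chain; a path $T\in\mathcal T_t$ corresponds to the realization jumping exactly at its switch points and $w_t(T)$ is its probability. Pruning with parameter $g$: write $s=o2^u$ with $o$ odd, $u\ge0$; $h_t(s)=1$ if $s\le t<s+g2^u$ and $0$ otherwise; $\hat p(t|t')=1-h_t(t')(1-p(t|t'))$; $\hat w_t$ is the Markov weight function defined from $\hat p$. *)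

From HB Require Import structures.
From mathcomp Require Import all_boot all_order all_algebra.
From mathcomp Require Import all_classical all_reals all_analysis.
Set Implicit Arguments. Unset Strict Implicit. Unset Printing Implicit Defensive.
Import Order.TTheory GRing.Theory Num.Theory.
Local Open Scope ring_scope.

Definition log2 {R : realType} (x : R) : R := ln x / ln 2.

(* A transition path T = (t_1,...,t_C; n) is the list [:: t_1; ...; t_C]
   of its switch points; it lies in T_n iff 1 < t_1 < ... < t_C <= n. *)
Definition is_tpath (n : nat) (T : seq nat) : bool :=
  sorted ltn T && all (fun x => (1 < x <= n)%N) T.

Definition bnd (n : nat) (T : seq nat) : seq nat := 1%N :: T ++ [:: n.+1].

Definition segments (n : nat) (T : seq nat) : seq (nat * nat) :=
  zip (bnd n T) (behead (bnd n T)).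

(* value of the chain U_{s-1} along the path T: last jump strictly before s
   (or 1 if none) *)
Definition last_switch (T : seq nat) (s : nat) : nat :=
  foldl maxn 1%N [seq x <- T | (x < s)%N].

(* Markov weight w_t(T): probability that the chain with switch
   probabilities q (q t t' = Pr(U_t = t | U_{t-1} = t')) jumps exactly at the
   switch points of T during steps 2..t. *)
Definition w {R : realType} (q : nat -> nat -> R) (t : nat) (T : seq nat) : R :=
  \prod_(2 <= s < t.+1)
     (if s \in T then q s (last_switch T s) else 1 - q s (last_switch T s)).

Definition h (g t s : nat) : bool :=
  let u := logn 2 s in (s <= t < s + g * 2 ^ u)%N.

Definition phat {R : realType} (g : nat) (p : nat -> nat -> R) (t t' : nat) : R :=
  1 - (h g t t')%:R * (1 - p t t').

Definition pts_in (n : nat) (Th : seq nat) (t t' : nat) : seq nat :=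
  [seq s <- bnd n Th | (t <= s < t')%N].

From HB Require Import structures.
From mathcomp Require Import all_boot all_order all_algebra.
From mathcomp Require Import all_classical all_reals all_analysis.
From mathcomp Require Import measurable_realfun.
From mathcomp Require Import zify lra.
Import Order.TTheory GRing.Theory Num.Theory.
Set Implicit Arguments. Unset Strict Implicit.

(* Let k = floor(log2(g+1)), so that 2^k <= g+1. If s = o 2^u with o odd, then h_t(s) = 1
   on the window [s, s + g 2^u), which contains the next multiple of 2^(u+k). Inside a
   segment [t, t') of T we jump greedily to that multiple until the window of the current
   switch reaches t'. Each jump raises the 2-adic valuation by at least k, and every window
   but the last ends before t', so a gap followed by i further jumps is less than
   (t'-t)/2^(ik); this bounds the gaps and, taking the first gap, the number of switches.
   Every non-switch time lies in the window of the preceding switch, so the pruned weight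
   of the concatenated chains is positive. The last inequality compares a nonincreasing
   sum with its integral. *)

Lemma mem_zip_fst (S T : eqType) (s : seq S) (s' : seq T) x y :
  (x, y) \in zip s s' -> x \in s.
Proof.
elim: s s' => [|a s IH] [|b s'] //=; rewrite !inE => /orP[/eqP[-> _]|/IH ->].
  by rewrite eqxx.
by rewrite orbT.
Qed.

Lemma mem_zip_path (T : eqType) (r : rel T) x s t t' :
  path r x s -> (t, t') \in zip (x :: s) s -> r t t'.
Proof.
elim: s x => [|y s IH] x //= /andP[rxy p_s]; rewrite inE => /orP[/eqP[-> ->] //|].
exact: IH.
Qed.

Lemma path_min_leq x s : path ltn x s -> all (leq x) (x :: s).
Proof.
move=> p_s; rewrite /= leqnn; apply: sub_all (order_path_min ltn_trans p_s).
by move=> z; apply: ltnW.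
Qed.

Lemma path_ltn_bounds x y s :
  path ltn x (s ++ [:: y]) -> all (fun z => x <= z < y)%N (x :: s).
Proof.
move=> p_xs; have : sorted ltn ((x :: s) ++ [:: y]) := p_xs.
rewrite (sorted_pairwise ltn_trans) pairwise_cat allrel1r => /andP[/allP lt_y _].
apply/allP => z z_in; rewrite lt_y // andbT.
by apply: (allP (path_min_leq p_xs)); rewrite -cat_cons mem_cat z_in.
Qed.

Lemma foldl_maxn_lt a s l : (a < s)%N -> all (fun x => x < s)%N l ->
  (a <= foldl maxn a l < s)%N.
Proof.
elim: l a => [|y l IH] a /= a_lt; first by rewrite leqnn.
move=> /andP[y_lt /(IH (maxn a y))]; rewrite gtn_max a_lt y_lt => /(_ isT) /andP[le_max ->].
by rewrite (leq_trans (leq_maxl a y) le_max).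
Qed.

Lemma is_tpathE n T : (0 < n)%N -> is_tpath n T = path ltn 1 (T ++ [:: n.+1]).
Proof.
move=> n_gt0; rewrite -[path _ _ _]/(sorted ltn (1 :: T ++ [:: n.+1])).
rewrite /is_tpath !(sorted_pairwise ltn_trans) /= pairwise_cat allrel1r all_cat /=.
rewrite ltnS n_gt0 !andbT andbC andbA; congr (_ && _).
by rewrite -all_predI; apply: eq_all => x /=; rewrite ltnS.
Qed.

Lemma segment_bounds n T t t' : (0 < n)%N -> is_tpath n T ->
  (t, t') \in segments n T -> (0 < t < t')%N.
Proof.
move=> n_gt0; rewrite is_tpathE // => p_T tt'_in.
have t_lt : (t < t')%N := mem_zip_path p_T tt'_in.
by rewrite t_lt andbT (allP (path_min_leq p_T)) // (mem_zip_fst tt'_in).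
Qed.

(* [h g t s] holds exactly when [s <= t < reach g s]. *)
Definition reach (g s : nat) : nat := s + g * 2 ^ logn 2 s.

Definition next_switch (k s : nat) : nat :=
  let e := logn 2 s + k in ((s %/ 2 ^ e).+1 * 2 ^ e)%N.

Definition step (g : nat) : rel nat := fun a b => (a < b <= reach g a)%N.

Lemma step_ltn g : subrel (step g) ltn.
Proof. by move=> a b /andP[]. Qed.

Section PrunedChain.

Variables g k : nat.
Hypotheses (k_gt0 : (0 < k)%N) (pow_k_le : (2 ^ k <= g.+1)%N).

Lemma next_switch_spec s : (0 < s)%N ->
  [/\ step g s (next_switch k s) & logn 2 s + k <= logn 2 (next_switch k s)]%N.
Proof.
move=> s_gt0; rewrite /step /reach /next_switch.
set u := logn 2 s.
have [m m_odd s_eq] := pfactor_coprime (isT : prime 2) s_gt0.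
rewrite coprime2n in m_odd.
have m_eq := divn_eq m (2 ^ k).
(* The jump is [2 ^ u * (2 ^ k - m %% 2 ^ k)], and [m %% 2 ^ k > 0] as [m] is odd. *)
have r_gt0 : (0 < m %% 2 ^ k)%N.
  rewrite lt0n; apply: contraL m_odd => /eqP r0.
  by rewrite m_eq r0 addn0 oddM oddX negb_and orbF -lt0n k_gt0 orbT.
have r_lt : (m %% 2 ^ k < 2 ^ k)%N by rewrite ltn_mod expn_gt0.
have -> : (s %/ 2 ^ (u + k) = m %/ 2 ^ k)%N.
  by rewrite s_eq -/u expnD mulnC divnMl ?expn_gt0.
have next_gt0 : (0 < (m %/ 2 ^ k).+1 * 2 ^ (u + k))%N by rewrite muln_gt0 expn_gt0.
rewrite -pfactor_dvdn // dvdn_mull // s_eq -/u expnD.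
move: m_eq r_gt0 r_lt pow_k_le; rewrite -/u.
set q := (m %/ 2 ^ k)%N; set r := (m %% 2 ^ k)%N; set P := (2 ^ u)%N; set K := (2 ^ k)%N.
have P_gt0 : (0 < P)%N by rewrite expn_gt0.
clearbody q r P K => -> r_gt0 r_lt K_le.
have : (P * K <= P * (r + g))%N by rewrite leq_mul2l; lia.
by split => //; apply/andP; split; nia.
Qed.

(* [fuel] only ensures termination: [t' - s] steps always suffice. *)
Fixpoint chain (t' fuel s : nat) : seq nat :=
  if fuel is fuel'.+1 then
    if (t' <= reach g s)%N then [:: s] else s :: chain t' fuel' (next_switch k s)
  else [:: s].

Lemma chain_head t' fuel s : chain t' fuel s = s :: behead (chain t' fuel s).
Proof. by case: fuel => //= fuel; case: ifP. Qed.

Lemma chain_spec t' fuel s : (0 < s)%N -> (s < t')%N -> (t' - s <= fuel)%N ->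
  let c := chain t' fuel s in
  path (step g) s (behead c ++ [:: t']) /\
  ((1 < size c)%N -> (g * 2 ^ (logn 2 s + (size c).-2 * k) < t' - s)%N).
Proof.
elim: fuel s => [|fuel IH] s s_gt0 s_lt fuel_ge /=; first by lia.
case: ifP => [t'_le|/negbT]; first by rewrite /= /step s_lt t'_le.
rewrite -ltnNge /reach => reach_lt.
have [s_step logn_le] := next_switch_spec s_gt0.
have /andP[s_next next_le] := s_step; rewrite /reach in next_le.
have next_lt : (next_switch k s < t')%N by lia.
have [c_path c_size] := IH _ (ltn_trans s_gt0 s_next) next_lt ltac:(lia).
split; first by rewrite /= chain_head /= s_step.
rewrite /=; case: (size _) c_size => [|[|m]] //= c_size _; first by rewrite addn0; lia.
have : (2 ^ (logn 2 s + m.+1 * k) <= 2 ^ (logn 2 (next_switch k s) + m * k))%N.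
  by rewrite leq_exp2l //; lia.
move/(leq_mul (leqnn g)) => pow_le; have := c_size isT; lia.
Qed.

Definition seg_chain (t t' : nat) : seq nat := chain t' (t' - t) t.

Lemma seg_chain_size t t' : (0 < t < t')%N -> (1 < size (seg_chain t t'))%N ->
  (2 ^ ((size (seg_chain t t')).-2 * k) < t' - t)%N.
Proof.
move=> /andP[t_gt0 t_lt] size_gt1.
have [_ /(_ size_gt1)] := chain_spec t_gt0 t_lt (leqnn _).
have g_gt0 : (0 < g)%N.
  have : (2 ^ 1 <= 2 ^ k)%N by rewrite leq_exp2l.
  lia.
rewrite -/(seg_chain t t'); apply: leq_ltn_trans; apply: leq_trans (leq_pmull _ g_gt0).
by rewrite leq_exp2l // leq_addl.
Qed.

Fixpoint pruned_bnd (B : seq nat) : seq nat :=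
  if B is b :: ((b' :: _) as B') then seg_chain b b' ++ pruned_bnd B' else [::].

Lemma pruned_bnd_spec b B : (0 < b)%N -> path ltn b B ->
  let Y := pruned_bnd (b :: B) ++ [:: last b B] in
  [/\ Y = b :: behead Y, path (step g) b (behead Y) &
    forall t t', (t, t') \in zip (b :: B) B ->
      [seq x <- Y | (t <= x < t')%N] = seg_chain t t' /\ t' \in Y].
Proof.
elim: B b => [|b' B IH] b b_gt0; first by split.
rewrite [path _ _ _]/= [last _ _]/= => /andP[b_lt p_B].
have [Y_eq Y_path Y_seg] := IH b' (ltn_trans b_gt0 b_lt) p_B.
have [c_path _] := chain_spec b_gt0 b_lt (leqnn _).
have c_eq := chain_head b' (b' - b) b.
rewrite -/(seg_chain b b') in c_eq c_path.
have c_range := path_ltn_bounds (sub_path (@step_ltn g) c_path).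
rewrite -c_eq in c_range.
have Y_min : all (leq b') (pruned_bnd (b' :: B) ++ [:: last b' B]).
  by rewrite Y_eq; apply: path_min_leq; exact: (sub_path (@step_ltn g) Y_path).
have -> : pruned_bnd (b :: b' :: B) = seg_chain b b' ++ pruned_bnd (b' :: B) by [].
cbv zeta; rewrite -catA.
set c := seg_chain b b' in c_eq c_path c_range *.
set Y := pruned_bnd (b' :: B) ++ _ in Y_eq Y_path Y_seg Y_min *.
split; first by rewrite c_eq.
  by rewrite c_eq /= Y_eq -cat_rcons cat_path -cats1 c_path last_cat /=.
move=> t t'; rewrite in_cons => /orP[/eqP[-> ->]|tt'_in].
  rewrite filter_cat (all_filterP c_range) (@eq_in_filter _ _ pred0) ?filter_pred0 ?cats0.
    by rewrite mem_cat Y_eq mem_head orbT.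
  by move=> x /(allP Y_min) le_x; rewrite /= ltnNge le_x andbF.
have le_t : (b' <= t)%N by apply: (allP (path_min_leq p_B)); apply: mem_zip_fst tt'_in.
have [<- t'_in] := Y_seg t t' tt'_in.
rewrite filter_cat (@eq_in_filter _ _ pred0) ?filter_pred0; first by rewrite mem_cat t'_in orbT.
by move=> x /(allP c_range) /andP[_ lt_x]; rewrite /= leqNgt (leq_trans lt_x le_t).
Qed.

End PrunedChain.

Lemma trunc_log2_gt0 g : (0 < g)%N -> (0 < trunc_log 2 g.+1)%N.
Proof.
move=> g_gt0; have := @trunc_log_ltn 2 g.+1 isT.
by case: (trunc_log 2 g.+1) => //; rewrite expn1; lia.
Qed.

Definition pruned_tpath (g n : nat) (T : seq nat) : seq nat :=
  behead (pruned_bnd g (trunc_log 2 g.+1) (bnd n T)).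

Lemma pruned_tpathP g n T : (0 < g)%N -> (0 < n)%N -> is_tpath n T ->
  let Th := pruned_tpath g n T in
  [/\ is_tpath n Th, path (step g) 1 (Th ++ [:: n.+1]) &
      forall t t', (t, t') \in segments n T ->
        pts_in n Th t t' = seg_chain g (trunc_log 2 g.+1) t t' /\ t' \in bnd n Th].
Proof.
move=> g_gt0 n_gt0; rewrite is_tpathE // => p_T Th.
have pow_k_le := @trunc_logP 2 g.+1 isT (ltn0Sn g).
have [Y_eq Y_path Y_seg] := pruned_bnd_spec (trunc_log2_gt0 g_gt0) pow_k_le (ltn0Sn 0) p_T.
have last_n : last 1 (T ++ [:: n.+1]) = n.+1 by rewrite last_cat.
rewrite last_n in Y_eq Y_path Y_seg.
have bnd_Th : bnd n Th = pruned_bnd g (trunc_log 2 g.+1) (bnd n T) ++ [:: n.+1].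
  rewrite /bnd /Th /pruned_tpath; move: Y_eq; rewrite /bnd.
  by case: (pruned_bnd _ _ _) => [[n0]|x r [->]] //; rewrite n0 in n_gt0.
have Th_path : path (step g) 1 (Th ++ [:: n.+1]) by move: Y_path; rewrite -bnd_Th.
split => //.
  by rewrite is_tpathE //; exact: (sub_path (@step_ltn g) Th_path).
by move=> t t' /Y_seg; rewrite /pts_in bnd_Th.
Qed.

Lemma path_step_reach g x Y s : path (step g) x Y -> (x < s)%N -> s \notin Y ->
  (s < last x Y)%N -> (s < reach g (foldl maxn x [seq y <- Y | y < s]))%N.
Proof.
elim: Y x => [|y Y IH] x /=.
  by move=> _ x_s _ s_x; have := ltn_trans x_s s_x; rewrite ltnn.
move=> /andP[/andP[x_lt y_le] p_Y] x_s; rewrite in_cons negb_or => /andP[s_y s_Y] s_lt.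
case: (ltngtP y s) => [y_s|s_lt_y|y_eq]; last by rewrite y_eq eqxx in s_y.
  by rewrite /= (maxn_idPr (ltnW x_lt)); apply: IH.
rewrite (@eq_in_filter _ _ pred0) ?filter_pred0 /=; first exact: leq_trans y_le.
move=> z /(allP (order_path_min ltn_trans (sub_path (@step_ltn g) p_Y))) y_z.
by rewrite /= ltnNge ltnW // (ltn_trans s_lt_y y_z).
Qed.

Lemma last_switch_spec g n Th s : path (step g) 1 (Th ++ [:: n.+1]) -> (1 < s <= n)%N ->
  (1 <= last_switch Th s < s)%N /\ (s \notin Th -> s < reach g (last_switch Th s))%N.
Proof.
move=> p_Th /andP[s_gt1 s_le]; split.
  by apply: foldl_maxn_lt => //; apply: filter_all.
move=> s_Th; have := path_step_reach p_Th s_gt1.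
rewrite mem_cat (negbTE s_Th) last_cat filter_cat /=.
have -> : (n.+1 < s)%N = false by apply/negbTE; rewrite -leqNgt leqW.
rewrite cats0 inE ltnS s_le; apply; apply/eqP; lia.
Qed.

Local Open Scope ring_scope.

Section PrunedWeight.

Variables (R : realType) (g : nat) (p : nat -> nat -> R).

Lemma phat_gt0 t t' : 0 < p t t' -> 0 < phat g p t t'.
Proof. by rewrite /phat; case: h; rewrite /= ?mul1r ?mul0r; lra. Qed.

Lemma phat_lt1 t t' : h g t t' -> p t t' < 1 -> phat g p t t' < 1.
Proof. by rewrite /phat => ->; rewrite mul1r; lra. Qed.

Lemma pruned_weight_gt0 n Th : (forall t' t, (1 <= t' < t)%N -> 0 < p t t' < 1) ->
  path (step g) 1 (Th ++ [:: n.+1]) -> 0 < w (phat g p) n Th.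
Proof.
move=> p_bounds p_Th; rewrite /w big_seq; apply: prodr_gt0 => s.
rewrite mem_index_iota => s_range.
have [ls_range ls_reach] := last_switch_spec p_Th s_range.
have /andP[p_gt0 p_lt1] := p_bounds _ _ ls_range.
case: ifP => [_|/negbT s_Th]; first exact: phat_gt0.
rewrite subr_gt0; apply: phat_lt1 p_lt1.
by case/andP: ls_range => _ /ltnW ls_le; rewrite /h /= ls_le ls_reach.
Qed.

End PrunedWeight.

Section RealBounds.

Variable R : realType.
Local Open Scope classical_set_scope.

Lemma ln2_gt0 : 0 < ln (2 : R).
Proof. by rewrite ln_gt0 // ltr1n. Qed.

Lemma nat_le_log2 (x : R) (j : nat) : 0 < x -> (j%:R <= log2 x) = ((2 ^ j)%:R <= x).
Proof.
move=> x_gt0; rewrite /log2 ler_pdivlMr ?ln2_gt0 // mulr_natl -lnXn // natrX.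
by rewrite ler_ln // posrE exprn_gt0.
Qed.

Lemma nat_lt_log2 (x : R) (j : nat) : 0 < x -> (j%:R < log2 x) = ((2 ^ j)%:R < x).
Proof.
move=> x_gt0; rewrite /log2 ltr_pdivlMr ?ln2_gt0 // mulr_natl -lnXn // natrX.
by rewrite ltr_ln // posrE exprn_gt0.
Qed.

Lemma floor_log2_nat (n : nat) : (0 < n)%N ->
  Num.floor (log2 (n%:R : R)) = (trunc_log 2 n)%:Z.
Proof.
move=> n_gt0; apply: floor_def.
have -> : (trunc_log 2 n)%:Z + 1 = (trunc_log 2 n).+1%:Z.
  by rewrite -[in RHS]addn1 PoszD.
rewrite !pmulrn nat_le_log2 ?ltr0n // ler_nat trunc_logP //=.
by rewrite ltNge nat_le_log2 ?ltr0n // ler_nat -ltnNge trunc_log_ltn.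
Qed.

Lemma powR2_nat (a : nat) : (2 : R) `^ a%:R = (2 ^ a)%:R.
Proof. by rewrite powR_mulrn // natrX. Qed.

Lemma size_le_ceil_log2 (L D k : nat) : (0 < L)%N -> (0 < D)%N -> (0 < k)%N ->
  ((1 < L)%N -> (2 ^ (L.-2 * k) < D)%N) ->
  L%:Z <= Num.ceil (log2 (D%:R : R) / k%:R) + 1.
Proof.
move=> L_gt0 D_gt0 k_gt0 L_bound; have k_pos : (0 : R) < k%:R by rewrite ltr0n.
case: L L_gt0 L_bound => [|[|j]] // _ L_bound.
  have : 0 <= Num.ceil (log2 (D%:R : R) / k%:R).
    rewrite ceil_ge0 (@lt_le_trans _ _ 0) ?ltrN10 // divr_ge0 ?ler0n //.
    by rewrite divr_ge0 ?(ltW ln2_gt0) // ln_ge0 // ler1n.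
  lia.
have := L_bound isT; rewrite -(ltr_nat R) -nat_lt_log2 ?ltr0n // natrM -ltr_pdivlMr //.
rewrite -[(j%:R : R)]/((Posz j)%:~R) -ceil_gt_int => j_lt.
by rewrite -[j.+2]addn1 PoszD lerD2r -[j.+1]addn1 PoszD lezD1.
Qed.

Lemma sum_le_integral_nonincreasing (F : R -> R) (b : R) (m : nat) :
  (forall x, 0 <= F x) -> (forall x y, x <= y -> F y <= F x) -> m%:R <= b ->
  ((\sum_(i < m) F i.+1%:R)%:E <= \int[lebesgue_measure]_(x in `[0%R, b]) (F x)%:E)%E.
Proof.
move=> F_ge0 F_noninc m_le.
have F_mble (D : set R) : measurable D -> measurable_fun D (fun x => (F x)%:E).
  by move=> mD; apply/measurable_EFinP; apply: nonincreasing_measurable => // x y.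
have unit_step j :
    ((F j.+1%:R)%:E <= \int[lebesgue_measure]_(x in `]j%:R, j.+1%:R]) (F x)%:E)%E.
  have cst_le := @ge0_le_integral _ _ R lebesgue_measure `]j%:R, j.+1%:R]
    (measurable_itv _) (cst (F j.+1%:R)%:E) (fun x => (F x)%:E).
  apply: le_trans (cst_le _ _ _ _); first last.
  - by move=> x; rewrite /= in_itv /= => /andP[_ x_le]; rewrite lee_fin F_noninc.
  - exact: F_mble.
  - exact: measurable_cst.
  - by move=> x _; rewrite lee_fin.
  rewrite integral_cst //.
  have := @lebesgue_measure_itv R (Interval (BRight j%:R) (BRight j.+1%:R)).
  rewrite /= lte_fin ltr_nat ltnSn => ->.
  by rewrite -EFinB -natrB // subSnn mule1.
have sum_le_nat j : ((\sum_(i < j) F i.+1%:R)%:E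
    <= \int[lebesgue_measure]_(x in `[0%R, j%:R]) (F x)%:E)%E.
  elim: j => [|j IH]; first by rewrite big_ord0; apply: integral_ge0 => x _; rewrite lee_fin.
  rewrite big_ord_recr /= EFinD (@itv_bndbnd_setU _ _ _ (BRight j%:R)) ?bnd_simp ?ler_nat //.
  rewrite ge0_integral_setU //; first exact: leeD.
  - by apply: F_mble; apply: measurableU; apply: measurable_itv.
  - by move=> x _; rewrite lee_fin.
  - apply/disj_setPS => x [] /=; rewrite !in_itv /= => /andP[_ x_le] /andP[lt_x _].
    by have := lt_le_trans lt_x x_le; rewrite ltxx.
apply: le_trans (sum_le_nat m) _.
apply: (@ge0_subset_integral _ _ R lebesgue_measure _ _ (measurable_itv _) (measurable_itv _)).
- exact: (F_mble _ (measurable_itv _)).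
- by move=> x _; rewrite lee_fin.
- by apply: subitvPr; rewrite bnd_simp.
Qed.

Lemma geometric_sum_le_integral (f : R -> R) (D k m : nat) :
  (0 < D)%N -> (0 < k)%N -> ((1 < m)%N -> (2 ^ (m.-2 * k) < D)%N) ->
  (forall x, 0 <= x -> 0 <= f x) -> (forall x y, 0 <= x -> x <= y -> f x <= f y) ->
  ((\sum_(i < m.-1) f (D%:R / 2 `^ (i%:R * k%:R)) + f D%:R)%:E
    <= \int[lebesgue_measure]_(x in `[0%R, (log2 (D%:R : R) / k%:R)%R])
         (f (D%:R / 2 `^ (x * k%:R))%R)%:E + (2 * f D%:R)%R%:E)%E.
Proof.
move=> D_gt0 k_gt0 m_bound f_ge0 f_nondecr.
set d : R := D%:R; have d_gt0 : 0 < d by rewrite ltr0n.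
pose F x := f (d / 2 `^ (x * k%:R)).
have quot_ge0 x : 0 <= d / 2 `^ (x * k%:R) by rewrite divr_ge0 ?powR_ge0 ?ltW.
have F_noninc x y : x <= y -> F y <= F x.
  move=> x_le; apply: f_nondecr => //; rewrite ler_pM2l // lef_pV2 ?posrE ?powR_gt0 //.
  by rewrite ler_powR ?ler1n // ler_wpM2r ?ler0n.
have int_ge0 : (0 <= \int[lebesgue_measure]_(x in `[0%R, (log2 d / k%:R)%R]) (F x)%:E)%E.
  by apply: integral_ge0 => x _; rewrite lee_fin f_ge0.
have fd_ge0 : 0 <= f d by rewrite f_ge0 ?ltW.
case: m m_bound => [|[|j]] m_bound /=.
1,2: by rewrite big_ord0 add0r addeC; apply: le_trans (leeDl _ int_ge0); rewrite lee_fin; lra.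
have j_le : j%:R <= log2 d / k%:R.
  rewrite ler_pdivlMr ?ltr0n // -natrM nat_le_log2 // ler_nat ltnW //.
  exact: m_bound.
rewrite big_ord_recl mul0r powRr0 divr1.
have -> : f d + \sum_(i < j) f (d / 2 `^ ((bump 0 i)%:R * k%:R)) + f d
    = \sum_(i < j) F i.+1%:R + 2 * f d.
  by under eq_bigr => i _ do rewrite /bump /= add1n; rewrite /F; lra.
by rewrite EFinD leeD // sum_le_integral_nonincreasing // => x; rewrite /F f_ge0.
Qed.

End RealBounds.

Section ChainGapSum.

Variables (R : realType) (g k : nat).
Hypotheses (k_gt0 : (0 < k)%N) (pow_k_le : (2 ^ k <= g.+1)%N).
Variable f : R -> R.
Hypotheses (f_ge0 : forall x, 0 <= x -> 0 <= f x)
  (f_nondecr : forall x y, 0 <= x -> x <= y -> f x <= f y).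

Lemma chain_gap_sum t' fuel s : (0 < s)%N -> (s < t')%N -> (t' - s <= fuel)%N ->
  let c := chain g k t' fuel s in let ts := c ++ [:: t'] in
  \sum_(i < size c) f ((nth 0 ts i.+1 - nth 0 ts i)%N%:R)
    <= \sum_(i < (size c).-1) f ((t' - s)%:R / 2 `^ (i%:R * k%:R)) + f (t' - s)%:R.
Proof.
elim: fuel s => [|fuel IH] s s_gt0 s_lt fuel_ge; first by lia.
have [_] := chain_spec k_gt0 pow_k_le s_gt0 s_lt fuel_ge.
rewrite /=; case: ifP => [_ _|/negbT]; first by rewrite big_ord1 big_ord0 add0r.
rewrite -ltnNge => reach_lt size_bound.
have [/andP[s_lt' s'_le] _] := next_switch_spec k_gt0 pow_k_le s_gt0.
set s' := next_switch k s in s_lt' s'_le size_bound *.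
have s'_lt : (s' < t')%N by rewrite /reach in s'_le reach_lt; lia.
have s'_gt0 := ltn_trans s_gt0 s_lt'.
have fuel_ge' : (t' - s' <= fuel)%N by move: fuel_ge s_lt'; clear; lia.
have c'_eq := chain_head g k t' fuel s'.
have := IH s' s'_gt0 s'_lt fuel_ge'.
set c' := chain g k t' fuel s' in c'_eq size_bound *; move=> /= gaps'_le.
have [L size_c'] : exists L, size c' = L.+1 by rewrite c'_eq; exists (size (behead c')).
have first_gap : f (s' - s)%:R <= f ((t' - s)%:R / 2 `^ (L%:R * k%:R)).
  rewrite -natrM powR2_nat; apply: f_nondecr; first by rewrite ler0n.
  rewrite ler_pdivlMr ?ltr0n ?expn_gt0 // -natrM ler_nat.
  have := size_bound; rewrite /= size_c' expnD mulnA => /(_ isT).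
  move/ltnW; apply: leq_trans; apply: leq_mul => //; rewrite /reach in s'_le; lia.
have rest_le : \sum_(i < L) f ((t' - s')%:R / 2 `^ (i%:R * k%:R)) + f (t' - s')%:R
    <= \sum_(i < L) f ((t' - s)%:R / 2 `^ (i%:R * k%:R)) + f (t' - s)%:R.
  have d_le : ((t' - s')%:R : R) <= (t' - s)%:R by rewrite ler_nat leq_sub2l // ltnW.
  apply: lerD; last exact: f_nondecr.
  apply: ler_sum => i _; apply: f_nondecr; first by rewrite divr_ge0 ?powR_ge0.
  by rewrite ler_pM2r ?invr_gt0.
rewrite size_c' in gaps'_le rest_le.
rewrite /= size_c' big_ord_recl [in X in _ <= X]big_ord_recr /=.
have -> : nth 0 (c' ++ [:: t']) 0 = s' by rewrite c'_eq.
under eq_bigr => i _ do rewrite /bump add1n add0n.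
by have := lerD first_gap (le_trans gaps'_le rest_le); lra.
Qed.
End ChainGapSum.

Unset Implicit Arguments. Set Strict Implicit.

Theorem lemma3 (R : realType) (g n : nat) (p : nat -> nat -> R) :
  (1 <= g)%N -> (1 <= n)%N ->
  (forall t' t : nat, (1 <= t' < t)%N -> 0 < p t t' < 1) ->
  forall T : seq nat, is_tpath n T ->
  exists Th : seq nat, is_tpath n Th /\
  forall t t' : nat, (t, t') \in segments n T ->
    let k : R := (Num.floor (log2 (g.+1)%:R : R))%:~R in
    let d : R := (t' - t)%:R in
    let l : int := Num.ceil (log2 d / k) + 1 in
    let ps := pts_in n Th t t' in
    let l' := size ps in
    let ts := ps ++ [:: t'] in
    [/\ 0 < w (phat g p) n Th,
        t \in bnd n Th, t' \in bnd n Th,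
        (size ps)%:Z <= l &
      l'%:Z <= l /\
      forall f : R -> R,
        (forall x, 0 <= x -> 0 <= f x) ->
        (forall x y, 0 <= x -> x <= y -> f x <= f y) ->
        \sum_(i < l') f ((nth 0 ts i.+1 - nth 0 ts i)%N%:R)
          <= \sum_(i < l'.-1) f (d / 2 `^ (i%:R * k)) + f d
        /\
        ((\sum_(i < l'.-1) f (d / 2 `^ (i%:R * k)) + f d)%:E
          <= (\int[lebesgue_measure]_(x in `[0%R, (log2 d / k)%R]%classic)
                (f (d / 2 `^ (x * k))%R)%:E)
             + (2 * f d)%R%:E)%E ].
Proof.
move=> g_gt0 n_gt0 p_bounds T T_tpath.
have [Th_tpath Th_path Th_seg] := pruned_tpathP g_gt0 n_gt0 T_tpath.
have k_gt0 := trunc_log2_gt0 g_gt0.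
have pow_k_le := @trunc_logP 2 g.+1 isT (ltn0Sn g).
set k := trunc_log 2 g.+1 in Th_seg k_gt0 pow_k_le.
exists (pruned_tpath g n T); split => // t t' tt'_seg; cbv zeta.
have [pts_eq t'_in] := Th_seg t t' tt'_seg.
have t_bounds := segment_bounds n_gt0 T_tpath tt'_seg.
have /andP[t_gt0 t_lt] := t_bounds.
have d_gt0 : (0 < t' - t)%N by rewrite subn_gt0.
have size_bound := seg_chain_size k_gt0 pow_k_le t_bounds.
have c_eq : seg_chain g k t t' = t :: _ := chain_head g k t' (t' - t) t.
have t_in : t \in bnd n (pruned_tpath g n T).
  by move: (mem_head t (behead (seg_chain g k t t'))); rewrite -c_eq -pts_eq mem_filter => /andP[].
have size_le : (size (seg_chain g k t t'))%:Z
    <= Num.ceil (log2 ((t' - t)%:R : R) / k%:R) + 1.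
  by apply: size_le_ceil_log2; rewrite // c_eq.
have k_eq : ((Num.floor (log2 (g.+1)%:R : R))%:~R : R) = k%:R by rewrite floor_log2_nat.
rewrite k_eq pts_eq; split => //; first exact: pruned_weight_gt0.
split => // f f_ge0 f_nondecr; split; first exact: chain_gap_sum.
exact: geometric_sum_le_integral.
Qed.
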